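(* Let $G$ be a group and $\mathrm{Pr}(G)$ its predicatization in the language $\mathcal{L}_{g\text{-}pred}=\{M^{(3)},I^{(2)},E^{(1)}\}$. Then every direct power $\Pi\mathrm{Pr}(G)=\prod_{i\in I}\mathrm{Pr}(G)$ is $\mathcal{L}_{g\text{-}pred}(\Pi G)$-equationally Noetherian.
   Context: The predicatization $\mathrm{Pr}(G)$ is the structure with universe $G$ where $M(x,y,z)\Leftrightarrow xy=z$, $I(x,y)\Leftrightarrow x=y^{-1}$, $E(x)\Leftrightarrow x=1$. The direct power consists of all sequences $[g_i\mid i\in I]$, with each relation holding coordinatewise. $\mathcal{L}_{g\text{-}pred}(\Pi G)$ is the language extended by a constant symbol for every element of the direct power. An equation is an atomic formula of this language (a relation symbol applied to variables/constants, or an equality of two variables/constants); a system is any set of equations in a fixed finite set of variables; two systems are equivalent if they have the same solution set. A structure is $\mathcal{L}_{g\text{-}pred}(\Pi G)$-equationally Noetherian if every system is equivalent over it to a finite subsystem. *)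

From mathcomp Require Import all_boot.
From Stdlib Require Import List.
Set Implicit Arguments. Unset Strict Implicit. Unset Printing Implicit Defensive.

Definition is_group (G : Type) (mul : G -> G -> G) (inv : G -> G) (one : G) : Prop :=
  (forall x y z, mul (mul x y) z = mul x (mul y z)) /\
  (forall x, mul one x = x) /\ (forall x, mul x one = x) /\
  (forall x, mul (inv x) x = one) /\ (forall x, mul x (inv x) = one).

Record gpred_struct := GPredStruct {
  carrier : Type;
  relM : carrier -> carrier -> carrier -> Prop;
  relI : carrier -> carrier -> Prop;
  relE : carrier -> Prop }.

Definition Pr (G : Type) (mul : G -> G -> G) (inv : G -> G) (one : G) : gpred_struct :=
  {| carrier := G;
     relM := fun x y z => mul x y = z;
     relI := fun x y => x = inv y;
     relE := fun x => x = one |}.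

Definition direct_power (I : Type) (S : gpred_struct) : gpred_struct :=
  {| carrier := I -> carrier S;
     relM := fun x y z => forall i, relM (x i) (y i) (z i);
     relI := fun x y => forall i, relI (x i) (y i);
     relE := fun x => forall i, relE (x i) |}.

Inductive term (n : nat) (C : Type) :=
| TVar of 'I_n
| TConst of C.

(* Equations = atomic formulas. *)
Inductive equation (n : nat) (C : Type) :=
| EqM of term n C & term n C & term n C
| EqI of term n C & term n C
| EqE of term n C
| EqEq of term n C & term n C.

Definition eval_term (S : gpred_struct) n (v : 'I_n -> carrier S)
  (t : term n (carrier S)) : carrier S :=
  match t with TVar x => v x | TConst c => c end.

Definition sat (S : gpred_struct) n (v : 'I_n -> carrier S)
  (e : equation n (carrier S)) : Prop :=
  match e with
  | EqM a b c => relM (eval_term v a) (eval_term v b) (eval_term v c)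
  | EqI a b => relI (eval_term v a) (eval_term v b)
  | EqE a => relE (eval_term v a)
  | EqEq a b => eval_term v a = eval_term v b
  end.

Definition solutions (S : gpred_struct) n (Sys : equation n (carrier S) -> Prop)
  : ('I_n -> carrier S) -> Prop :=
  fun v => forall e, Sys e -> sat v e.

(* S is L(S)-equationally Noetherian (constants = all elements of S):
   every system is equivalent to a finite subsystem. *)
Definition eq_noetherian_with_consts (S : gpred_struct) : Prop :=
  forall n (Sys : equation n (carrier S) -> Prop),
    exists l : list (equation n (carrier S)),
      (forall e, List.In e l -> Sys e) /\
      (forall v, solutions Sys v <-> solutions (fun e => List.In e l) v).

(** In Pr(G), and hence in any direct power of it, each argument of [M] and
    [I] is determined by the remaining ones.  Consequently two equations of
    the same shape (same relation symbol, same variables in the same places,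
    possibly different constants) that have a common solution have the same
    solutions.  There are only finitely many shapes in [n] variables, so a
    system is equivalent to the subsystem that keeps, for every shape, one
    equation of that shape, together with a second one sharing no solution
    with it whenever such an equation exists. *)

From mathcomp Require Import all_boot.
From Stdlib Require Import Classical FunctionalExtensionality.
Set Implicit Arguments. Unset Strict Implicit.

Record cancellative (S : gpred_struct) : Prop := {
  relM_inj1 : forall x x' y z : carrier S, relM x y z -> relM x' y z -> x = x';
  relM_inj2 : forall x y y' z : carrier S, relM x y z -> relM x y' z -> y = y';
  relM_inj3 : forall x y z z' : carrier S, relM x y z -> relM x y z' -> z = z';
  relI_inj1 : forall x x' y : carrier S, relI x y -> relI x' y -> x = x';
  relI_inj2 : forall x y y' : carrier S, relI x y -> relI x y' -> y = y' }.

Section GroupPredicatization.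
Variables (G : Type) (mul : G -> G -> G) (inv : G -> G) (one : G).
Hypothesis groupG : is_group mul inv one.

Lemma mulIg y : injective (mul^~ y).
Proof.
case: groupG => mulA [_ [mulg1 [_ mulgV]]] x x' Exy.
by rewrite -(mulg1 x) -(mulg1 x') -(mulgV y) -!mulA Exy.
Qed.

Lemma mulgI x : injective (mul x).
Proof.
case: groupG => mulA [mul1g [_ [mulVg _]]] y y' Exy.
by rewrite -(mul1g y) -(mul1g y') -(mulVg x) !mulA Exy.
Qed.

Lemma invgK : involutive inv.
Proof.
case: groupG => _ [_ [_ [mulVg mulgV]]] x.
by apply: (@mulgI (inv x)); rewrite mulgV mulVg.
Qed.

Lemma Pr_cancellative : cancellative (Pr mul inv one).
Proof.
split=> /=.
- by move=> x x' y z <- /mulIg ->.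
- by move=> x y y' z <- /mulgI ->.
- by move=> x y z z' -> ->.
- by move=> x x' y -> ->.
- by move=> x y y' -> /(congr1 inv); rewrite !invgK.
Qed.

End GroupPredicatization.

Lemma direct_power_cancellative (I : Type) (S : gpred_struct) :
  cancellative S -> cancellative (direct_power I S).
Proof.
case=> M1 M2 M3 I1 I2; split=> /= [x x' y z|x y y' z|x y z z'|x x' y|x y y'] H1 H2;
  apply: functional_extensionality => i.
- exact: M1 (H1 i) (H2 i).
- exact: M2 (H1 i) (H2 i).
- exact: M3 (H1 i) (H2 i).
- exact: I1 (H1 i) (H2 i).
- exact: I2 (H1 i) (H2 i).
Qed.

Definition term_var n C (t : term n C) : option 'I_n :=
  if t is TVar x then Some x else None.

(* The two booleans encode the relation symbol. *)
Definition shape n := (bool * bool * option 'I_n * option 'I_n * option 'I_n)%type.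

Definition equation_shape n C (e : equation n C) : shape n :=
  match e with
  | EqM a b c => (false, false, term_var a, term_var b, term_var c)
  | EqI a b => (false, true, term_var a, term_var b, None)
  | EqE a => (true, false, term_var a, None, None)
  | EqEq a b => (true, true, term_var a, term_var b, None)
  end.

Lemma same_term_var n C (a a' : term n C) :
  term_var a = term_var a' -> a = a' \/ exists c c', a = TConst n c /\ a' = TConst n c'.
Proof.
case: a a' => [x|c] [x'|c'] //=.
- by case=> ->; left.
- by right; exists c, c'.
Qed.

Section Cancellative.
Variable S : gpred_struct.
Hypothesis cancS : cancellative S.

Lemma sat_same_shape n (e1 e2 : equation n (carrier S)) (v w : 'I_n -> carrier S) :
  equation_shape e1 = equation_shape e2 -> sat v e1 -> sat v e2 -> sat w e1 -> sat w e2.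
Proof.
(* Either the relation at [v] forces the differing constants of [e1] and [e2]
   to agree, or, with a single variable position, it forces [w] to agree with
   [v] on that variable. *)
case: e1 e2 => [a b c|a b|a|a b] [a' b' c'|a' b'|a'|a' b'] //= [];
  do ?[move=> /same_term_var [->|[? [? [-> ->]]]]] => /= v_e1 v_e2 w_e1;
  first [ exact: w_e1 | exact: v_e2 | congruence
        | by rewrite -(relM_inj1 cancS v_e1 w_e1) | by rewrite -(relM_inj1 cancS v_e1 v_e2)
        | by rewrite -(relM_inj2 cancS v_e1 w_e1) | by rewrite -(relM_inj2 cancS v_e1 v_e2)
        | by rewrite -(relM_inj3 cancS v_e1 w_e1) | by rewrite -(relM_inj3 cancS v_e1 v_e2)
        | by rewrite -(relI_inj1 cancS v_e1 w_e1) | by rewrite -(relI_inj1 cancS v_e1 v_e2)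
        | by rewrite -(relI_inj2 cancS v_e1 w_e1) | by rewrite -(relI_inj2 cancS v_e1 v_e2) ].
Qed.

Lemma finite_subsystem_of_shape n (Sys : equation n (carrier S) -> Prop) (s : shape n) :
  exists l : list (equation n (carrier S)),
    (forall e, List.In e l -> Sys e) /\
    (forall w, (forall e, List.In e l -> sat w e) ->
       forall e, Sys e -> equation_shape e = s -> sat w e).
Proof.
have [[e1 [Se1 sh1]]|noshape] := classic (exists e1, Sys e1 /\ equation_shape e1 = s);
  last by exists nil; split=> // w _ e Se sh; case: noshape; exists e.
have [[e2 [Se2 [_ disjoint]]]|compatible] := classic
  (exists e2, Sys e2 /\ equation_shape e2 = s /\ ~ exists v, sat v e1 /\ sat v e2).
- exists [:: e1; e2]; split=> [e /= [<-|[<-|[]]] //|w sol_w].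
  by case: disjoint; exists w; split; apply: sol_w; [left | right; left].
- exists [:: e1]; split=> [e /= [<-|[]] //|w sol_w e Se sh].
  have [v [sol_v1 sol_v]] : exists v, sat v e1 /\ sat v e.
    by apply: NNPP => nocommon; apply: compatible; exists e.
  apply: (sat_same_shape _ sol_v1 sol_v); first by rewrite sh1 sh.
  by apply: sol_w; left.
Qed.

Lemma finite_subsystem_of_shapes n (Sys : equation n (carrier S) -> Prop) (L : seq (shape n)) :
  exists l : list (equation n (carrier S)),
    (forall e, List.In e l -> Sys e) /\
    (forall w, (forall e, List.In e l -> sat w e) ->
       forall e, Sys e -> equation_shape e \in L -> sat w e).
Proof.
elim: L => [|s L [l [lSys sol_l]]]; first by exists nil.
have [l1 [l1Sys sol_l1]] := finite_subsystem_of_shape Sys s.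
exists (l1 ++ l); split=> [e /(List.in_app_or l1 l e) [/l1Sys|/lSys] //|w sol_w e Se].
rewrite in_cons => /predU1P [sh|shL].
- by apply: sol_l1 => // e' l1e'; apply: sol_w; apply: List.in_or_app; left.
- by apply: sol_l => // e' le'; apply: sol_w; apply: List.in_or_app; right.
Qed.

Theorem cancellative_eq_noetherian : eq_noetherian_with_consts S.
Proof.
move=> n Sys; have [l [lSys sol_l]] := finite_subsystem_of_shapes Sys (enum {: shape n}).
exists l; split=> // v; split=> [sol_v e /lSys|sol_v e Se]; first exact: sol_v.
exact: sol_l sol_v e Se (mem_enum _ _).
Qed.

End Cancellative.

Theorem corollary1 (G : Type) (mul : G -> G -> G) (inv : G -> G) (one : G)
  (HG : is_group mul inv one) (I : Type) :
  eq_noetherian_with_consts (direct_power I (Pr mul inv one)).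
Proof. exact/cancellative_eq_noetherian/direct_power_cancellative/Pr_cancellative. Qed.
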